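(* Let $n\ge2$ and let $\rho_1,\rho_2,\rho_3$ be pairwise orthogonal states on $(\mathbb C^2)^{\otimes n}$ (each qubit held by a different party) such that $\rho_1=|g_1\rangle\langle g_1|$ and $\rho_2=|g_2\rangle\langle g_2|$ are GHZ-type states, i.e. $|g_i\rangle=\alpha_i|0\cdots0\rangle+\beta_i|1\cdots1\rangle$ with $\alpha_i,\beta_i$ nonzero complex numbers. Then $\{\rho_1,\rho_2,\rho_3\}$ is not perfectly distinguishable by LOCC.
   Context: ''Perfectly distinguishable by LOCC'': there is a finite-round protocol, in which in each round one party performs a local measurement and broadcasts the outcome, that identifies with probability 1 which state of the set was given. States are orthogonal if $\mathrm{tr}(\rho_k\rho_l)=0$. *)

From HB Require Import structures.
From mathcomp Require Import all_boot all_order all_algebra.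
Set Implicit Arguments. Unset Strict Implicit. Unset Printing Implicit Defensive.
Import Order.TTheory GRing.Theory Num.Theory.
Local Open Scope ring_scope.

(* Computational basis configurations of n qubits: x : 'I_n -> {0,1}. *)
Definition cfg (n : nat) := {ffun 'I_n -> 'I_2}.
(* Dimension of (C^2)^{(x) n}; equals 2^n. Basis vector i <-> enum_val i. *)
Definition qdim (n : nat) : nat := #|{: cfg n}|.

Section Q.
Variable C : numClosedFieldType.

Definition adjmx (m k : nat) (A : 'M[C]_(m, k)) : 'M[C]_(k, m) :=
  (map_mx Num.conj A)^T.

Definition psdmx (d : nat) (A : 'M[C]_d) : Prop :=
  forall v : 'cV[C]_d, 0 <= (adjmx v *m A *m v) 0 0.

Definition is_state (d : nat) (A : 'M[C]_d) : Prop := psdmx A /\ \tr A = 1.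

(* GHZ-type vector alpha|0...0> + beta|1...1> *)
Definition ghz_vec (n : nat) (a b : C) : 'cV[C]_(qdim n) :=
  \col_i (let x : cfg n := enum_val i in
          (if [forall q, x q == 0%R :> 'I_2] then a else 0)
        + (if [forall q, x q == 1%R :> 'I_2] then b else 0)).

Definition ghz_dm (n : nat) (a b : C) : 'M[C]_(qdim n) :=
  ghz_vec n a b *m adjmx (ghz_vec n a b).

(* the local operator K acting on qubit p, identity on the other qubits *)
Definition lift_local (n : nat) (p : 'I_n) (K : 'M[C]_2) : 'M[C]_(qdim n) :=
  \matrix_(i, j) (let x : cfg n := enum_val i in let y : cfg n := enum_val j in
     K (x p) (y p) * ([forall q, (q != p) ==> (x q == y q)] : bool)%:R).

End Q.

(* A finite-round LOCC protocol: a finite tree.  At a Node, party p performs a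
   local measurement with m outcomes given by Kraus operators K j on its qubit,
   broadcasts the outcome j, and the protocol continues with next j.
   A Leaf announces the identified state k. *)
Inductive protocol (C : numClosedFieldType) (n : nat) : Type :=
| Leaf : 'I_3 -> protocol C n
| Node : forall (p : 'I_n) (m : nat), ('I_m -> 'M[C]_2) -> ('I_m -> protocol C n) -> protocol C n.

Fixpoint valid_protocol (C : numClosedFieldType) (n : nat) (t : protocol C n) : Prop :=
  match t with
  | Leaf _ => True
  | Node p m K next =>
      (\sum_(j < m) adjmx (K j) *m K j = 1%:M)%R /\ forall j, valid_protocol (next j)
  end.

(* With accumulated (unnormalized) operator A along the branch, each leaf with
   announced label k is reached with probability zero from every state l <> k,
   i.e. the identification is correct with probability 1. *)
Fixpoint identifies (C : numClosedFieldType) (n : nat) (rho : 'I_3 -> 'M[C]_(qdim n))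
    (t : protocol C n) (A : 'M[C]_(qdim n)) : Prop :=
  match t with
  | Leaf k => forall l : 'I_3, l != k -> (\tr (A *m rho l *m adjmx A) = 0)%R
  | Node p m K next => forall j, identifies rho (next j) (lift_local p (K j) *m A)%R
  end.

Definition LOCC_perfectly_distinguishable (C : numClosedFieldType) (n : nat)
    (rho : 'I_3 -> 'M[C]_(qdim n)) : Prop :=
  exists t : protocol C n, valid_protocol t /\ identifies rho t 1%:M%R.

From HB Require Import structures.
From mathcomp Require Import all_boot all_order all_algebra.
Import Order.TTheory GRing.Theory Num.Theory.
Local Open Scope ring_scope.
Set Implicit Arguments. Unset Strict Implicit. Unset Printing Implicit Defensive.

(* Every operator accumulated along a branch of an LOCC protocol is a product
   operator (x)_q M_q, so we first develop product operators and the lifting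
   of one-qubit operators.  Two facts about protocols then drive the proof:
   (1) perfect identification forces A g1 _|_ A g2 for the accumulated
       operator A of every branch (completeness of the instruments lets this
       propagate from the leaves to the root);
   (2) the invariant "rho_3 has nonzero weight and A does not annihilate both
       |0...0> and |1...1>" can be carried from the root to some leaf.
   At a leaf the invariant contradicts identification.  At a node the
   invariant survives along some outcome: if the new product operator
   annihilated |c...c> through a qubit other than the measuring one, by (1)
   the old operator would annihilate both GHZ components; if only through the
   measured qubit, that factor vanishes and so does the weight of rho_3. *)

Section Adjoint.
Variable C : numClosedFieldType.

Lemma adjmx_mul (m k l : nat) (A : 'M[C]_(m, k)) (B : 'M[C]_(k, l)) :
  adjmx (A *m B) = adjmx B *m adjmx A.
Proof. by rewrite /adjmx map_mxM trmx_mul. Qed.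

Lemma adjmx1 (d : nat) : adjmx (1%:M : 'M[C]_d) = 1%:M.
Proof. by rewrite /adjmx map_mx1 trmx1. Qed.

Lemma adjmx_comb (m k : nat) (a b : C) (A B : 'M[C]_(m, k)) :
  adjmx (a *: A + b *: B) = a^* *: adjmx A + b^* *: adjmx B.
Proof. by apply/matrixP => i j; rewrite /adjmx !mxE rmorphD !rmorphM. Qed.

Lemma norm2_eq0 (d : nat) (v : 'cV[C]_d) : (adjmx v *m v) 0 0 = 0 -> v = 0.
Proof.
rewrite mxE => H; apply/matrixP => i j; rewrite ord1 mxE.
have /(_ i) : forall k : 'I_d, adjmx v 0 k * v k 0 = 0.
  move=> k; apply: (psumr_eq0P _ H) => // l _.
  by rewrite /adjmx !mxE mulrC mul_conjC_ge0.
by rewrite /adjmx !mxE mulrC => /eqP; rewrite mul_conjC_eq0 => /eqP.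
Qed.

(* If the pure state g is annihilated (in trace) by the branch operator A,
   then A g = 0: tr(A g g* A* ) is the squared norm of A g. *)
Lemma tr_rank1_eq0 (d : nat) (A : 'M[C]_d) (g : 'cV[C]_d) :
  \tr (A *m (g *m adjmx g) *m adjmx A) = 0 -> A *m g = 0.
Proof.
move=> H; apply: norm2_eq0; rewrite -H adjmx_mul -trace_mx11.
by rewrite -!mulmxA mulmxA mxtrace_mulC !mulmxA.
Qed.

Lemma orth_multiples_eq0 (d : nat) (X : 'cV[C]_d) (s t : C) :
  s != 0 -> t != 0 -> adjmx (s *: X) *m (t *: X) = 0 -> X = 0.
Proof.
move=> Hs Ht H; apply: norm2_eq0.
have -> : adjmx X *m X = 0.
  have adjZ : adjmx (s *: X) = s^* *: adjmx X.
    by apply/matrixP => i j; rewrite /adjmx !mxE rmorphM.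
  move: H; rewrite adjZ -scalemxAl -scalemxAr scalerA => /eqP.
  by rewrite scaler_eq0 mulf_eq0 conjC_eq0 (negbTE Hs) (negbTE Ht) => /eqP.
by rewrite mxE.
Qed.

Lemma orth_coef_det_neq0 (a1 b1 a2 b2 : C) :
  a1 != 0 -> b2 != 0 -> a1^* * a2 + b1^* * b2 = 0 -> a1 * b2 - a2 * b1 != 0.
Proof.
move=> Ha Hb Ho; apply/negP; rewrite subr_eq0 => /eqP E.
have : (a1^* * a2 + b1^* * b2) * b1 = (a1 * a1^* + b1 * b1^*) * b2.
  rewrite mulrDl -!mulrA -E [b2 * b1]mulrC mulrDl !mulrA [a1^* * a1]mulrC.
  by rewrite [b1^* * b1]mulrC.
rewrite Ho mul0r => /esym /eqP; rewrite mulf_eq0 (negbTE Hb) orbF.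
apply/negP; rewrite gt_eqF // ltr_wpDr ?mul_conjC_ge0 //.
by rewrite mul_conjC_gt0.
Qed.

Lemma det_system_eq0 (d : nat) (a1 b1 a2 b2 : C) (X Y : 'cV[C]_d) :
  a1 * b2 - a2 * b1 != 0 ->
  a1 *: X + b1 *: Y = 0 -> a2 *: X + b2 *: Y = 0 -> X = 0 /\ Y = 0.
Proof.
move=> Hd E1 E2.
have HX : (a1 * b2 - a2 * b1) *: X = b2 *: (a1 *: X + b1 *: Y) - b1 *: (a2 *: X + b2 *: Y).
  rewrite !scalerDr !scalerA scalerBl opprD addrACA [b2 * b1]mulrC subrr addr0.
  by rewrite [b2 * a1]mulrC [b1 * a2]mulrC.
have HY : (a1 * b2 - a2 * b1) *: Y = a1 *: (a2 *: X + b2 *: Y) - a2 *: (a1 *: X + b1 *: Y).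
  by rewrite !scalerDr !scalerA scalerBl opprD addrACA [a1 * a2]mulrC subrr add0r.
rewrite E1 E2 !scaler0 subrr in HX HY.
by split; apply/eqP; [move/eqP: HX | move/eqP: HY]; rewrite scaler_eq0 (negbTE Hd).
Qed.

End Adjoint.

Section ProductOperators.
Variables (C : numClosedFieldType) (n : nat).
Implicit Types (M N : 'I_n -> 'M[C]_2) (p : 'I_n) (K : 'M[C]_2).

Definition cfg_of (i : 'I_(qdim n)) : cfg n := enum_val i.

Definition tensor_op M : 'M[C]_(qdim n) :=
  \matrix_(i, j) \prod_q M q (cfg_of i q) (cfg_of j q).

Lemma tensor_opE M i j : tensor_op M i j = \prod_q M q (cfg_of i q) (cfg_of j q).
Proof. by rewrite mxE. Qed.

Lemma tensor_op_ext M N : (forall q, M q = N q) -> tensor_op M = tensor_op N.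
Proof. by move=> E; apply/matrixP => i j; rewrite !tensor_opE; apply: eq_bigr => q _; rewrite E. Qed.

Lemma tensor_op_mul M N : tensor_op M *m tensor_op N = tensor_op (fun q => M q *m N q).
Proof.
apply/matrixP => i j; rewrite [LHS]mxE tensor_opE.
pose F (z : cfg n) := \prod_q (M q (cfg_of i q) (z q) * N q (z q) (cfg_of j q)).
rewrite (eq_bigr (fun k => F (cfg_of k))) => [|k _]; last by rewrite !tensor_opE /F big_split.
rewrite /cfg_of -(big_enum_val (A := predT)) /F.
under [RHS]eq_bigr => q _ do rewrite mxE.
by rewrite bigA_distr_bigA.
Qed.

Lemma tensor_op_adj M : adjmx (tensor_op M) = tensor_op (fun q => adjmx (M q)).
Proof.
apply/matrixP => i j; rewrite /adjmx !mxE rmorph_prod.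
by apply: eq_bigr => q _; rewrite !mxE.
Qed.

Lemma prod_delta (P : pred 'I_n) (x y : cfg n) :
  \prod_(q | P q) (((x q == y q) : bool)%:R : C) = ([forall q, P q ==> (x q == y q)] : bool)%:R.
Proof.
case: (boolP [forall q, P q ==> (x q == y q)]) => [/forallP H | /forallPn [q]].
  by rewrite big1 // => q Pq; move: (H q); rewrite Pq /= => ->.
rewrite negb_imply => /andP [Pq /negbTE xyq].
by rewrite (bigD1 q) //= xyq mul0r.
Qed.

Lemma tensor_op1 : tensor_op (fun _ => 1%:M) = 1%:M.
Proof.
apply/matrixP => i j; rewrite tensor_opE mxE.
under eq_bigr => q _ do rewrite mxE.
rewrite (prod_delta predT); congr ((_ : bool)%:R).
apply/forallP/eqP => [H | -> q]; last by rewrite eqxx.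
by apply: enum_val_inj; apply/ffunP => q; exact/eqP/H.
Qed.

Lemma tensor_op0 M p : M p = 0 -> tensor_op M = 0.
Proof.
by move=> Hp; apply/matrixP => i j; rewrite tensor_opE mxE (bigD1 p) //= Hp mxE mul0r.
Qed.

Definition local_factors p K : 'I_n -> 'M[C]_2 :=
  fun q => if q == p then K else 1%:M.

Lemma lift_local_tensor p K : lift_local p K = tensor_op (local_factors p K).
Proof.
apply/matrixP => i j; rewrite tensor_opE mxE (bigD1 p) //= /local_factors eqxx.
congr (_ * _); rewrite -(prod_delta (fun q => q != p)).
by apply: eq_bigr => q /negbTE ->; rewrite mxE.
Qed.

Lemma lift_local_mul p K (L : 'M[C]_2) :
  lift_local p K *m lift_local p L = lift_local p (K *m L).
Proof.
rewrite !lift_local_tensor tensor_op_mul; apply: tensor_op_ext => q.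
by rewrite /local_factors; case: (q == p); rewrite ?mulmx1.
Qed.

Lemma lift_local_adj p K : adjmx (lift_local p K) = lift_local p (adjmx K).
Proof.
rewrite !lift_local_tensor tensor_op_adj; apply: tensor_op_ext => q.
by rewrite /local_factors; case: (q == p); rewrite ?adjmx1.
Qed.

Lemma lift_local_sum p (m : nat) (K : 'I_m -> 'M[C]_2) :
  \sum_j lift_local p (K j) = lift_local p (\sum_j K j).
Proof.
apply/matrixP => i k; rewrite summxE [RHS]mxE /= summxE mulr_suml.
by apply: eq_bigr => j _; rewrite mxE.
Qed.

Lemma lift_local_complete p (m : nat) (K : 'I_m -> 'M[C]_2) :
  \sum_j adjmx (K j) *m K j = 1%:M ->
  \sum_j adjmx (lift_local p (K j)) *m lift_local p (K j) = 1%:M.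
Proof.
move=> HK; under eq_bigr => j _ do rewrite lift_local_adj lift_local_mul.
rewrite lift_local_sum HK lift_local_tensor -tensor_op1; apply: tensor_op_ext => q.
by rewrite /local_factors; case: (q == p).
Qed.

(* The trace of an operator splits over the outcomes of a complete local
   measurement, so a nonzero trace survives along some outcome. *)
Lemma exists_outcome_weight p (m : nat) (K : 'I_m -> 'M[C]_2) (X : 'M[C]_(qdim n)) :
  \sum_j adjmx (K j) *m K j = 1%:M -> \tr X != 0 ->
  exists j, \tr (lift_local p (K j) *m X *m adjmx (lift_local p (K j))) != 0.
Proof.
move=> HK HX; apply/existsP; apply: contraNT HX; rewrite negb_exists => /forallP Hall.
rewrite -[X]mulmx1 -(lift_local_complete p HK) mulmx_sumr raddf_sum /=.
apply/eqP/big1 => j _.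
by rewrite mulmxA mxtrace_mulC mulmxA; apply/eqP; rewrite -[_ == 0]negbK Hall.
Qed.

Definition const_ket (c : 'I_2) : 'cV[C]_(qdim n) :=
  delta_mx (enum_rank ([ffun => c] : cfg n)) 0.

Lemma tensor_op_const_ket M c i :
  (tensor_op M *m const_ket c) i 0 = \prod_q M q (cfg_of i q) c.
Proof.
rewrite /const_ket -colE mxE tensor_opE; apply: eq_bigr => q _.
by rewrite /cfg_of enum_rankK ffunE.
Qed.

Lemma tensor_op_const_ket_eq0 M c :
  tensor_op M *m const_ket c = 0 <-> exists q, col c (M q) = 0.
Proof.
split=> [H | [q Hq]]; last first.
  apply/matrixP => i j; rewrite ord1 tensor_op_const_ket mxE (bigD1 q) //=.
  by move/matrixP: Hq => /(_ (cfg_of i q) 0); rewrite !mxE => ->; rewrite mul0r.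
case: (boolP [exists q, col c (M q) == 0]) => [/existsP [q /eqP] | ]; first by exists q.
rewrite negb_exists => /forallP Hnz; exfalso.
have /all_sig [x Hx] : forall q, {b | M q b c != 0}.
  move=> q; case: (pickP (fun b => M q b c != 0)) => [b Hb | H0]; first by exists b.
  by case/eqP: (Hnz q); apply/matrixP => b j; rewrite ord1 !mxE; apply/eqP/negbFE/H0.
move/matrixP: H => /(_ (enum_rank [ffun q => x q]) 0).
rewrite tensor_op_const_ket mxE /cfg_of enum_rankK => /eqP.
by apply/negP; apply/prodf_neq0 => q _; rewrite ffunE.
Qed.

Lemma cols_eq0 (B : 'M[C]_2) : col 0 B = 0 -> col 1 B = 0 -> B = 0.
Proof.
move=> /matrixP H0 /matrixP H1; apply/matrixP => b c; rewrite mxE.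
have [-> | ->] : c = 0 \/ c = 1 by case: c => [[|[|]]] // ? ; [left | right]; apply: val_inj.
  by move: (H0 b 0); rewrite !mxE.
by move: (H1 b 0); rewrite !mxE.
Qed.

Lemma ghz_vec_dec (a b : C) : ghz_vec n a b = a *: const_ket 0 + b *: const_ket 1.
Proof.
apply/matrixP => i j; rewrite ord1 !mxE /= eqxx !andbT.
have E (c : 'I_2) (s : C) : (if [forall q, enum_val i q == c] then s else 0)
    = s * (i == enum_rank ([ffun => c] : cfg n))%:R.
  have -> : [forall q, enum_val i q == c] = (i == enum_rank ([ffun => c] : cfg n)).
    apply/forallP/eqP => [H | -> q]; last by rewrite enum_rankK ffunE.
    by rewrite -[i]enum_valK; congr enum_rank; apply/ffunP => q; rewrite ffunE; apply/eqP.
  by case: (i == _); rewrite ?mulr1 ?mulr0.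
by rewrite -!E.
Qed.

Lemma mulmx_ghz_vec (A : 'M[C]_(qdim n)) (a b : C) :
  A *m ghz_vec n a b = a *: (A *m const_ket 0) + b *: (A *m const_ket 1).
Proof. by rewrite ghz_vec_dec mulmxDr -!scalemxAr. Qed.

Hypothesis n_gt0 : (0 < n)%N.

(* |0...0> and |1...1> are orthonormal (n > 0 makes them distinct). *)
Lemma const_ket_inner (c c' : 'I_2) :
  adjmx (const_ket c) *m const_ket c' = (c == c')%:R%:M.
Proof.
rewrite /adjmx /const_ket map_delta_mx trmx_delta mul_delta_mx_cond.
have -> : (enum_rank ([ffun => c] : cfg n) == enum_rank ([ffun => c'] : cfg n)) = (c == c').
  rewrite (inj_eq enum_rank_inj); apply/eqP/eqP => [H | -> //].
  by have := congr1 (fun f : cfg n => f (Ordinal n_gt0)) H; rewrite !ffunE.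
by case: (c == c'); rewrite ?mulr1n ?mulr0n; apply/matrixP => i j; rewrite !ord1 !mxE ?eqxx.
Qed.

Lemma ghz_inner (a1 b1 a2 b2 : C) :
  adjmx (ghz_vec n a1 b1) *m ghz_vec n a2 b2 = (a1^* * a2 + b1^* * b2)%:M.
Proof.
rewrite !ghz_vec_dec adjmx_comb mulmxDl !mulmxDr -!scalemxAl -!scalemxAr.
rewrite !const_ket_inner /= !scale_scalar_mx !mulr1 !mulr0.
by rewrite -!raddfD /= addr0 add0r.
Qed.

End ProductOperators.

Section Protocols.
Variables (C : numClosedFieldType) (n : nat) (rho : 'I_3 -> 'M[C]_(qdim n)).

Lemma identifies_branch_orth (g1 g2 : 'cV[C]_(qdim n)) :
  rho 0 = g1 *m adjmx g1 -> rho 1 = g2 *m adjmx g2 ->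
  forall t : protocol C n, valid_protocol t -> forall A, identifies rho t A ->
  adjmx (A *m g1) *m (A *m g2) = 0.
Proof.
move=> H0 H1; elim=> [k | p m K next IH] /=.
  move=> _ A H; case: (k =P 0) => [Hk | Hk].
    by have := H 1; rewrite Hk H1 => /(_ isT) /tr_rank1_eq0 ->; rewrite mulmx0.
  have := H 0; rewrite H0 eq_sym => /(_ (introN eqP Hk)) /tr_rank1_eq0 ->.
  by rewrite /adjmx map_mx0 trmx0 mul0mx.
move=> [HK Hv] A H.
rewrite -[A *m g2]mul1mx -(lift_local_complete p HK) mulmx_suml mulmx_sumr.
by apply: big1 => j _; have := IH j (Hv j) _ (H j); rewrite !adjmx_mul !mulmxA.
Qed.

Variables (a1 b1 a2 b2 : C).
Hypotheses (a1_neq0 : a1 != 0) (b1_neq0 : b1 != 0) (a2_neq0 : a2 != 0) (b2_neq0 : b2 != 0).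
Hypotheses (rho0_ghz : rho 0 = ghz_dm n a1 b1) (rho1_ghz : rho 1 = ghz_dm n a2 b2).
Hypothesis ghz_orth : a1^* * a2 + b1^* * b2 = 0.

Definition kills_ghz_support (A : 'M[C]_(qdim n)) : Prop :=
  A *m const_ket C n 0 = 0 /\ A *m const_ket C n 1 = 0.

Lemma kills_one_kills_both (A : 'M[C]_(qdim n)) :
  adjmx (A *m ghz_vec n a1 b1) *m (A *m ghz_vec n a2 b2) = 0 ->
  A *m const_ket C n 0 = 0 \/ A *m const_ket C n 1 = 0 -> kills_ghz_support A.
Proof.
rewrite !mulmx_ghz_vec => O [E | E]; rewrite E !scaler0 in O.
  by rewrite !add0r in O; split=> //; apply: orth_multiples_eq0 b1_neq0 b2_neq0 O.
by rewrite !addr0 in O; split=> //; apply: orth_multiples_eq0 a1_neq0 a2_neq0 O.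
Qed.

(* A leaf announcing rho_3 must annihilate both GHZ states, hence (the
   coefficients being independent) the whole GHZ support. *)
Lemma leaf3_kills (A : 'M[C]_(qdim n)) :
  identifies rho (Leaf C n 2) A -> kills_ghz_support A.
Proof.
move=> /= H.
have E1 := H 0 isT; have E2 := H 1 isT.
rewrite rho0_ghz in E1; rewrite rho1_ghz in E2.
move: (tr_rank1_eq0 E1) (tr_rank1_eq0 E2); rewrite !mulmx_ghz_vec.
exact: det_system_eq0 (orth_coef_det_neq0 a1_neq0 b2_neq0 ghz_orth).
Qed.

Lemma step_kills_factor (M M' : 'I_n -> 'M[C]_2) (p : 'I_n) :
  (forall q, q != p -> M' q = M q) ->
  adjmx (tensor_op M *m ghz_vec n a1 b1) *m (tensor_op M *m ghz_vec n a2 b2) = 0 ->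
  ~ kills_ghz_support (tensor_op M) -> kills_ghz_support (tensor_op M') -> M' p = 0.
Proof.
move=> EM O Hnz [K0 K1]; have kill_at (c : 'I_2) q :
    col c (M' q) = 0 -> q != p -> tensor_op M *m const_ket C n c = 0.
  by move=> Hq /EM Eq; apply/tensor_op_const_ket_eq0; exists q; rewrite -Eq.
have [q0 Hq0] := (tensor_op_const_ket_eq0 M' 0).1 K0.
have [q1 Hq1] := (tensor_op_const_ket_eq0 M' 1).1 K1.
have [Eq0 | /(kill_at _ _ Hq0) A0] := eqVneq q0 p;
  last by case: Hnz; apply: kills_one_kills_both O _; left.
have [Eq1 | /(kill_at _ _ Hq1) A1] := eqVneq q1 p;
  last by case: Hnz; apply: kills_one_kills_both O _; right.
by apply: cols_eq0; [rewrite -Eq0 | rewrite -Eq1].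
Qed.

Lemma product_branch_not_identifies (t : protocol C n) :
  valid_protocol t -> forall M : 'I_n -> 'M[C]_2,
  \tr (tensor_op M *m rho 2 *m adjmx (tensor_op M)) != 0 ->
  ~ kills_ghz_support (tensor_op M) -> ~ identifies rho t (tensor_op M).
Proof.
elim: t => [k | p m K next IH] /=.
  move=> _ M Hw Hnz H; have [Ek | Nk] := eqVneq k 2.
    by apply: Hnz; apply: leaf3_kills; rewrite -Ek.
  by move: Hw; rewrite (H 2) ?eqxx // eq_sym.
move=> [HK Hv] M Hw Hnz H.
have O := identifies_branch_orth rho0_ghz rho1_ghz (t := Node p K next) (conj HK Hv) H.
have [j Hj] := exists_outcome_weight p HK Hw.
pose M' q := local_factors p (K j) q *m M q.
have EM : lift_local p (K j) *m tensor_op M = tensor_op M'.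
  by rewrite lift_local_tensor tensor_op_mul.
have Hw' : \tr (tensor_op M' *m rho 2 *m adjmx (tensor_op M')) != 0.
  by rewrite -EM adjmx_mul !mulmxA; rewrite !mulmxA in Hj.
apply: (IH j (Hv j) M' Hw'); last by rewrite -EM; apply: H.
move=> Hk; have M'p0 : M' p = 0.
  apply: (step_kills_factor _ O Hnz Hk) => q /negbTE Nq.
  by rewrite /M' /local_factors Nq mul1mx.
by move: Hw'; rewrite (tensor_op0 M'p0) !mul0mx raddf0 eqxx.
Qed.

End Protocols.

Unset Implicit Arguments.
Set Strict Implicit.

Theorem mainTheorem6 (C : numClosedFieldType) (n : nat) (hn : (2 <= n)%N)
  (rho : 'I_3 -> 'M[C]_(qdim n)) :
  (forall k, is_state (rho k)) ->
  (forall k l : 'I_3, k != l -> \tr (rho k *m rho l) = 0) ->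
  (exists a1 b1 : C, [/\ a1 != 0, b1 != 0 & rho 0 = ghz_dm n a1 b1]) ->
  (exists a2 b2 : C, [/\ a2 != 0, b2 != 0 & rho 1 = ghz_dm n a2 b2]) ->
  ~ LOCC_perfectly_distinguishable rho.
Proof.
move=> Hst _ [a1 [b1 [Ha1 Hb1 H0]]] [a2 [b2 [Ha2 Hb2 H1]]] [t [Hv Hid]].
have n_gt0 : (0 < n)%N by apply: ltnW.
(* The root branch (A = 1) shows that the two GHZ states are orthogonal. *)
have Horth : a1^* * a2 + b1^* * b2 = 0.
  have := identifies_branch_orth H0 H1 Hv Hid.
  by rewrite !mul1mx ghz_inner // => /matrixP /(_ 0 0); rewrite !mxE.
(* At the root rho_3 has weight tr rho_3 = 1 and 1 does not kill |0...0>. *)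
apply: (product_branch_not_identifies Ha1 Hb1 Ha2 Hb2 H0 H1 Horth Hv
          (M := fun _ => 1%:M)); rewrite tensor_op1.
- by rewrite adjmx1 mul1mx mulmx1 (proj2 (Hst 2)) oner_neq0.
- rewrite /kills_ghz_support mul1mx => -[/matrixP /(_ (enum_rank [ffun => 0]) 0)].
  by rewrite !mxE !eqxx /= => /eqP; rewrite oner_eq0.
- exact: Hid.
Qed.
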